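(* Let $A_n=1$ if $n=2^{k+1}-2$ for some integer $k\ge0$ and $A_n=0$ otherwise, and let $D(n)=\det\left(A_{i+j}\right)_{i,j=0}^{n-1}$ for $n\ge1$, $D(0)=1$. Then for all $n\ge 0$, $$D(2n)=(-1)^{\binom{n}{2}}D(n),\qquad D(2n+1)=(-1)^{\binom{n+1}{2}}D(n).$$ *)

From mathcomp Require Import all_boot all_algebra.
Set Implicit Arguments. Unset Strict Implicit. Unset Printing Implicit Defensive.
Import GRing.Theory.
Local Open Scope ring_scope.

(* is_A n <=> n = 2^(k+1) - 2 for some integer k >= 0.
   Any such k satisfies k <= n (since 2^(k+1) - 2 >= k), so quantifying over
   k : 'I_n.+1 loses nothing; this makes the predicate boolean. *)
Definition is_A (n : nat) : bool := [exists k : 'I_n.+1, n == (2 ^ k.+1 - 2)%N].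

Definition A (n : nat) : int := if is_A n then 1 else 0.

Definition D (n : nat) : int := \det (\matrix_(i < n, j < n) A (i + j)%N).

From mathcomp Require Import all_boot all_algebra.
From mathcomp Require Import perm zify.
Set Implicit Arguments. Unset Strict Implicit. Unset Printing Implicit Defensive.
Import GRing.Theory.
Local Open Scope ring_scope.

(** Listing rows and columns even indices first, the Hankel matrix of a
    sequence vanishing at odd indices becomes block diagonal, so that
    [D (n1 + n2) = H n1 * D n2] for [n1 - n2] in {0, 1}, where [H] is the
    Hankel determinant of [Aeven k = A (2 k)].  The sequence [Aeven] vanishes
    at the positive even indices, and the same reordering (after eliminating
    the first row and column against [Aeven 0 = 1] in odd size) makes its
    Hankel matrix block anti-triangular:
    [H (2 q) = (-1)^q (H q)^2] and [H (2 q + 1) = (-1)^q (D q)^2].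
    Induction then gives [D n = ±1] and [H n = (-1)^C(n, 2)]. *)

Section BlockDeterminants.
Variable R : comNzRingType.

Lemma det_conj_perm m (s : 'S_m) (M : 'M[R]_m) :
  \det (\matrix_(i, j) M (s i) (s j)) = \det M.
Proof.
have -> : \matrix_(i, j) M (s i) (s j) = row_perm s (col_perm s M).
  by apply/matrixP => i j; rewrite !mxE.
rewrite row_permE col_permE !det_mulmx !det_perm odd_permV.
by rewrite mulrCA -expr2 sqrr_sign mulr1.
Qed.

Lemma det_block_swap q : \det (block_mx 0 1%:M 1%:M 0 : 'M[R]_(q + q)) = (-1) ^+ q.
Proof.
have -> : (block_mx 0 1%:M 1%:M 0 : 'M[R]_(q + q)) =
    block_mx 1%:M 0 1%:M 1%:M *m block_mx 1%:M 1%:M 0 (-1)%:M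
    *m block_mx 1%:M 0 (-1)%:M 1%:M.
  rewrite !mulmx_block !(mulmx1, mul1mx, mulmx0, mul0mx, addr0, add0r).
  by rewrite !raddfN /= addrN mul0mx subr0.
by rewrite !det_mulmx det_ublock !det_lblock !det_scalar !expr1n !mul1r mulr1.
Qed.

Lemma det_block_dr0 q (X B C : 'M[R]_q) :
  \det (block_mx X B C 0) = (-1) ^+ q * \det B * \det C.
Proof.
have -> : block_mx X B C 0 = block_mx B X 0 C *m block_mx 0 1%:M 1%:M 0.
  by rewrite mulmx_block !(mulmx1, mulmx0, addr0, add0r).
by rewrite det_mulmx det_block_swap det_ublock mulrC mulrA.
Qed.

Lemma det_block_ul1 p n (r : 'M[R]_(p, n)) (c : 'M[R]_(n, p)) (N : 'M[R]_n) :
  \det (block_mx 1%:M r c N) = \det (N - c *m r).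
Proof.
have -> : block_mx 1%:M r c N =
    block_mx 1%:M 0 c 1%:M *m block_mx 1%:M r 0 (N - c *m r).
  by rewrite mulmx_block !(mulmx1, mul1mx, mulmx0, mul0mx, addr0, add0r) addrC subrK.
by rewrite det_mulmx det_lblock det_ublock !det_scalar !expr1n !mul1r.
Qed.

End BlockDeterminants.

Lemma sign_bin2_double (R : pzRingType) q : (-1) ^+ 'C(q + q, 2) = (-1) ^+ q :> R.
Proof.
have -> : 'C(q + q, 2) = (q + q * q.-1 * 2)%N.
  by rewrite bin2 -[RHS]doubleK; congr (_ ./2); nia.
by rewrite exprD exprM sqrr_sign mulr1.
Qed.

Lemma sign_bin2_double1 (R : pzRingType) q :
  (-1) ^+ 'C(1 + (q + q), 2) = (-1) ^+ q :> R.
Proof.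
have -> : 'C(1 + (q + q), 2) = (q + q * q * 2)%N.
  by rewrite bin2 -[RHS]doubleK; congr (_ ./2); nia.
by rewrite exprD exprM sqrr_sign mulr1.
Qed.

Definition interleave n1 (x : nat) : nat :=
  if (x < n1)%N then (2 * x)%N else (2 * (x - n1)).+1.

Lemma interleave_lshift n1 n2 (i : 'I_n1) : interleave n1 (lshift n2 i) = (2 * i)%N.
Proof. by rewrite /interleave /= ltn_ord. Qed.

Lemma interleave_rshift n1 n2 (j : 'I_n2) : interleave n1 (rshift n1 j) = (2 * j).+1.
Proof. by rewrite /interleave /= ltnNge leq_addr /= addKn. Qed.

Lemma interleave_inj n1 : injective (interleave n1).
Proof. by move=> x y; rewrite /interleave; case: ifP; case: ifP; lia. Qed.

Lemma interleave_lt n1 n2 :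
  (n2 <= n1 <= n2.+1)%N -> forall x, (x < n1 + n2)%N -> (interleave n1 x < n1 + n2)%N.
Proof. by move=> n12 x; rewrite /interleave; case: ifP; lia. Qed.

(* [0], then the odd indices, then the positive even ones. *)
Definition interleave1 q (x : nat) : nat :=
  if x is x'.+1 then (interleave q x').+1 else 0.

Lemma interleave1_lshift q (i : 'I_q) :
  interleave1 q (rshift 1 (lshift q i)) = (2 * i).+1.
Proof. by rewrite /= add0n /interleave ltn_ord. Qed.

Lemma interleave1_rshift q (j : 'I_q) :
  interleave1 q (rshift 1 (rshift q j)) = (2 * j).+2.
Proof. by rewrite /= add0n /interleave ltnNge leq_addr addKn. Qed.

Lemma interleave1_0 q : interleave1 q (lshift (q + q) (ord0 : 'I_1)) = 0%N.
Proof. by []. Qed.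

Lemma interleave1_inj q : injective (interleave1 q).
Proof. by case=> [|x] [|y] //= [/interleave_inj ->]. Qed.

Lemma interleave1_lt q x :
  (x < 1 + (q + q))%N -> (interleave1 q x < 1 + (q + q))%N.
Proof.
case: x => [|x] //; rewrite !add1n !ltnS; apply: interleave_lt; lia.
Qed.

Section Hankel.
Variable R : comNzRingType.

Definition hankel (a : nat -> R) m := \det (\matrix_(i < m, j < m) a (i + j)%N).

Lemma hankel0 a : hankel a 0 = 1.
Proof. exact: det_mx00. Qed.

Lemma eq_hankel a b m : a =1 b -> hankel a m = hankel b m.
Proof. by move=> eq_ab; congr (\det _); apply/matrixP => i j; rewrite !mxE. Qed.

Lemma hankel_reindex a m (g : nat -> nat) :
    injective g -> (forall x, x < m -> g x < m)%N ->
  hankel a m = \det (\matrix_(i < m, j < m) a (g i + g j)%N).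
Proof.
move=> g_inj g_lt.
pose f (i : 'I_m) : 'I_m := Ordinal (g_lt i (ltn_ord i)).
have f_inj : injective f by move=> i j [/g_inj/val_inj].
rewrite /hankel -(det_conj_perm (perm f_inj)); congr (\det _).
by apply/matrixP => i j; rewrite !mxE !permE.
Qed.

Lemma hankel_split_odd0 a n1 n2 :
    (forall k, a (2 * k).+1 = 0) -> (n2 <= n1 <= n2.+1)%N ->
  hankel a (n1 + n2) =
    hankel (fun k => a (2 * k)%N) n1 * hankel (fun k => a (2 * k).+2) n2.
Proof.
move=> a_odd n12.
rewrite (hankel_reindex a (@interleave_inj n1) (interleave_lt n12)).
set M := \matrix_(i, j) _; rewrite -[M]submxK.
have -> : dlsubmx M = 0.
  apply/matrixP => i j.
  by rewrite !mxE interleave_lshift interleave_rshift addSn -mulnDr a_odd.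
rewrite det_ublock /hankel; congr (_ * _); apply: congr1; apply/matrixP => i j;
  rewrite !mxE ?interleave_lshift ?interleave_rshift.
  by rewrite -mulnDr.
by rewrite addSn addnS -mulnDr.
Qed.

Lemma hankel_double_evenS0 b q :
    (forall k, b (2 * k).+2 = 0) ->
  hankel b (q + q) = (-1) ^+ q * hankel (fun k => b (2 * k).+1) q ^+ 2.
Proof.
move=> b_evenS.
have q_q1 : (q <= q <= q.+1)%N by rewrite leqnn leqnSn.
rewrite (hankel_reindex b (@interleave_inj q) (interleave_lt q_q1)).
set M := \matrix_(i, j) _; rewrite -[M]submxK.
have -> : drsubmx M = 0.
  apply/matrixP => i j.
  by rewrite !mxE !interleave_rshift addSn addnS -mulnDr b_evenS.
rewrite det_block_dr0 expr2 mulrA /hankel; congr (_ * _ * _); apply: congr1;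
  apply/matrixP => i j; rewrite !mxE interleave_lshift interleave_rshift;
  by rewrite ?addSn ?addnS -mulnDr.
Qed.

Lemma hankel_double1_evenS0 b q :
    b 0%N = 1 -> (forall k, b (2 * k).+2 = 0) ->
  hankel b (1 + (q + q)) = (-1) ^+ q * hankel (fun k => b (2 * k).+3) q ^+ 2.
Proof.
move=> b0 b_evenS.
rewrite (hankel_reindex b (@interleave1_inj q) (@interleave1_lt q)).
set M := \matrix_(i, j) _; rewrite -[M]submxK.
have -> : ulsubmx M = 1%:M by apply/matrixP => i j; rewrite !mxE !ord1 /= b0.
rewrite det_block_ul1; set N := (X in \det X); rewrite -[N]submxK.
have -> : drsubmx N = 0.
  apply/matrixP => i j; rewrite !mxE big_ord1 !mxE !interleave1_rshift interleave1_0.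
  rewrite addn0 add0n !b_evenS mulr0 subr0 !addSn !addnS -mulnDr.
  by rewrite (_ : (2 * (i + j)).+4 = (2 * (i + j).+1).+2)%N ?b_evenS //; lia.
rewrite det_block_dr0 expr2 mulrA /hankel; congr (_ * _ * _); apply: congr1;
  apply/matrixP => i j; rewrite !mxE big_ord1 !mxE;
  rewrite interleave1_lshift interleave1_rshift interleave1_0;
  by rewrite addn0 add0n !b_evenS ?(mulr0, mul0r) subr0 !addSn !addnS -mulnDr.
Qed.

End Hankel.

Lemma is_AP n : reflect (exists k, n = (2 ^ k.+1 - 2)%N) (is_A n).
Proof.
apply: (iffP existsP) => [[k /eqP ->]|[k ->]]; first by exists k.
have k_lt : (k < (2 ^ k.+1 - 2).+1)%N.
  have := ltn_expl k (isT : (1 < 2)%N); rewrite expnS; lia.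
by exists (Ordinal k_lt).
Qed.

Lemma A0 : A 0 = 1.
Proof. by rewrite /A; case: is_AP => // -[]; exists 0%N. Qed.

Lemma A_odd k : A (2 * k).+1 = 0.
Proof.
by rewrite /A; case: is_AP => // -[j]; rewrite expnS; have := expn_gt0 2 j; lia.
Qed.

Lemma A_evenS k : A (2 * k).+2 = A k.
Proof.
rewrite /A; case: is_AP => [[j Ej]|not_A]; case: is_AP => //.
- case; case: j Ej => [|j]; rewrite !expnS => Ej; first lia.
  by exists j; rewrite expnS; have := expn_gt0 2 j; lia.
- case=> j' Ek; case: not_A; exists j'.+1.
  by rewrite Ek !expnS; have := expn_gt0 2 j'; lia.
Qed.

Definition Aeven k := A (2 * k).

Lemma Aeven0 : Aeven 0 = 1.
Proof. exact: A0. Qed.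

Lemma Aeven_evenS k : Aeven (2 * k).+2 = 0.
Proof.
by rewrite /Aeven (_ : 2 * _ = (2 * (2 * k).+1).+2)%N ?A_evenS ?A_odd //; lia.
Qed.

Lemma Aeven_odd k : Aeven (2 * k).+1 = Aeven k.
Proof. by rewrite /Aeven (_ : 2 * _ = (2 * (2 * k)).+2)%N ?A_evenS //; lia. Qed.

Lemma Aeven_oddS k : Aeven (2 * k).+3 = A k.
Proof. by rewrite /Aeven (_ : 2 * _ = (2 * (2 * k).+2).+2)%N ?A_evenS //; lia. Qed.

Lemma hankel_A_split n1 n2 :
  (n2 <= n1 <= n2.+1)%N -> hankel A (n1 + n2) = hankel Aeven n1 * hankel A n2.
Proof. by move=> n12; rewrite (hankel_split_odd0 A_odd n12) (eq_hankel _ A_evenS). Qed.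

Lemma hankel_Aeven_double q :
  hankel Aeven (q + q) = (-1) ^+ q * hankel Aeven q ^+ 2.
Proof. by rewrite (hankel_double_evenS0 _ Aeven_evenS) (eq_hankel _ Aeven_odd). Qed.

Lemma hankel_Aeven_double1 q :
  hankel Aeven (1 + (q + q)) = (-1) ^+ q * hankel A q ^+ 2.
Proof.
by rewrite (hankel_double1_evenS0 _ Aeven0 Aeven_evenS) (eq_hankel _ Aeven_oddS).
Qed.

Lemma hankel_Aeven_sign_A_sqr m :
  hankel Aeven m = (-1) ^+ 'C(m, 2) /\ hankel A m ^+ 2 = 1.
Proof.
elim/ltn_ind: m => m IH.
have := odd_double_half m; rewrite -addnn; move: (odd m) (m./2) => [] q /= m_eq.
- have [_ Aq] := IH q (ltac:(lia)); rewrite -m_eq.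
  have Hc : hankel Aeven (1 + (q + q)) = (-1) ^+ 'C(1 + (q + q), 2).
    by rewrite hankel_Aeven_double1 Aq mulr1 sign_bin2_double1.
  split=> //; rewrite (_ : 1 + (q + q) = q.+1 + q)%N; last by lia.
  rewrite hankel_A_split ?leqnn ?leqnSn // exprMn Aq mulr1.
  (* For [q = 0] the size [q.+1] is [m] itself, out of reach of [IH]. *)
  have [q0 | q_gt0] := posnP q; first by move: Hc; rewrite q0 => ->; rewrite sqrr_sign.
  by have [-> _] := IH q.+1 (ltac:(lia)); rewrite sqrr_sign.
- rewrite -m_eq add0n; have [-> | q_gt0] := posnP q; first by rewrite !hankel0 expr1n.
  have [Hc Aq] := IH q (ltac:(lia)).
  rewrite hankel_Aeven_double hankel_A_split ?leqnn ?leqnSn //.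
  by rewrite Hc sqrr_sign mulr1 sign_bin2_double exprMn Aq mulr1 sqrr_sign.
Qed.

Theorem theorem2p5 (n : nat) :
  D (2 * n) = (-1) ^+ 'C(n, 2) * D n /\
  D (2 * n).+1 = (-1) ^+ 'C(n.+1, 2) * D n.
Proof.
change (hankel A (2 * n) = (-1) ^+ 'C(n, 2) * hankel A n /\
        hankel A (2 * n).+1 = (-1) ^+ 'C(n.+1, 2) * hankel A n).
rewrite (_ : 2 * n = n + n)%N; last by lia.
rewrite (_ : (n + n).+1 = n.+1 + n)%N; last by lia.
rewrite !hankel_A_split ?leqnn ?leqnSn //.
have [-> _] := hankel_Aeven_sign_A_sqr n.
by have [-> _] := hankel_Aeven_sign_A_sqr n.+1.
Qed.
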